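(* Assume the standing assumptions (A1)–(A4) below. Let $r>0$ be a constant such that $\|u\|^2+\|w\|^2\le r$ for every $u\in\mathcal U$ and every extreme point $w$ of $\mathcal W$. Then for every $x\in\mathcal X$ the optimal value of \[ \min_{\lambda\in\mathbb R,\ \Lambda\in\mathbb R^{(k+m)\times n_2},\ \rho\in\mathbb R}\ \lambda+r\rho\quad\text{s.t.}\quad \lambda g_1g_1^T-\tfrac12 G(x)+\tfrac12(E^T\Lambda^T+\Lambda E)+\rho I\in \mathrm{COP}(\widehat{\mathcal U}\times\mathbb R^m_+),\ \ \rho\ge 0 \] equals $\pi(x)$.
   Context: Data: $A\in\mathbb R^{m\times n_1}$, $B\in\mathbb R^{m\times n_2}$, $c\in\mathbb R^{n_1}$, $d\in\mathbb R^{n_2}$, $F\in\mathbb R^{m\times k}$, $\mathcal X\subseteq\mathbb R^{n_1}$ closed convex. $\widehat{\mathcal U}\subseteq\mathbb R_+\times\mathbb R^{k-1}$ is a closed, convex, full-dimensional cone and $\mathcal U:=\{u\in\widehat{\mathcal U}: u_1=1\}$, assumed nonempty and compact. $e_1\in\mathbb R^k$ is the first standard basis vector, $g_1:=(e_1;0)\in\mathbb R^{k+m}$. The two-stage problem (RLP) is: $v^*_{RLP}:=\inf\{c^Tx+\sup_{u\in\mathcal U}d^Ty(u)\}$ over $x\in\mathcal X$ and maps $y:\mathcal U\to\mathbb R^{n_2}$ with $Ax+By(u)\ge Fu$ for all $u\in\mathcal U$. Standing assumptions: (A1) $\mathcal X$ and $\widehat{\mathcal U}$ are computationally tractable; (A2)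 (RLP) is feasible; (A3) $v^*_{RLP}$ is finite; (A4) relatively complete recourse: for all $x\in\mathcal X$, $u\in\mathcal U$ there is $y\in\mathbb R^{n_2}$ with $By\ge Fu-Ax$. Define $\mathcal W:=\{w\in\mathbb R^m: w\ge0,\ B^Tw=d\}$, $\pi(x):=\max_{u\in\mathcal U}\min_{y\in\mathbb R^{n_2}}\{d^Ty: By\ge Fu-Ax\}$, $E:=\begin{pmatrix}-de_1^T & B^T\end{pmatrix}\in\mathbb R^{n_2\times(k+m)}$, and $G(x):=\begin{pmatrix}0&(F-Axe_1^T)^T\\ F-Axe_1^T&0\end{pmatrix}\in\mathcal S^{k+m}$. For a closed convex cone $\mathcal K\subseteq\mathbb R^n$, $\mathrm{COP}(\mathcal K):=\{M\in\mathcal S^n: z^TMz\ge0\ \forall z\in\mathcal K\}$ and $\mathrm{CPP}(\mathcal K):=\{\sum_i z^i(z^i)^T: z^i\in\mathcal K\}$ (finite sums). *)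

From Stdlib Require Import Reals.
From mathcomp Require Import all_boot.
Set Implicit Arguments.
Unset Strict Implicit.
Unset Printing Implicit Defensive.
Open Scope R_scope.

Definition vec (n : nat) := 'I_n -> R.
Definition mat (p q : nat) := 'I_p -> 'I_q -> R.

Definition Rsum (n : nat) (f : 'I_n -> R) : R := \big[Rplus/0]_(i < n) f i.

Definition dot (n : nat) (u v : vec n) : R := Rsum (fun i => u i * v i).
Definition sqnorm (n : nat) (u : vec n) : R := dot u u.
Definition mulmv (p q : nat) (M : mat p q) (v : vec q) : vec p :=
  fun i => Rsum (fun j => M i j * v j).
Definition trmv (p q : nat) (M : mat p q) (v : vec p) : vec q :=
  fun j => Rsum (fun i => M i j * v i).

Definition convexR (n : nat) (C : vec n -> Prop) : Prop :=
  forall u v : vec n, C u -> C v -> forall t, 0 <= t <= 1 ->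
    C (fun i => t * u i + (1 - t) * v i).

(* sequentially closed (= closed in R^n) *)
Definition closedR (n : nat) (C : vec n -> Prop) : Prop :=
  forall (xs : nat -> vec n) (x : vec n), (forall t, C (xs t)) ->
    (forall i, Un_cv (fun t => xs t i) (x i)) -> C x.

(* sequentially compact (= compact in R^n) *)
Definition compactR (n : nat) (C : vec n -> Prop) : Prop :=
  forall xs : nat -> vec n, (forall t, C (xs t)) ->
    exists (phi : nat -> nat) (x : vec n),
      (forall t, (phi t < phi t.+1)%nat) /\ C x /\
      (forall i, Un_cv (fun t => xs (phi t) i) (x i)).

Definition coneR (n : nat) (C : vec n -> Prop) : Prop :=
  (exists u, C u) /\ forall u, C u -> forall t, 0 <= t -> C (fun i => t * u i).

Definition full_dimensional (n : nat) (C : vec n -> Prop) : Prop :=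
  exists (u0 : vec n) (eps : R), 0 < eps /\
    forall u : vec n, sqnorm (fun i => u i - u0 i) < eps * eps -> C u.

Definition extreme_point (n : nat) (C : vec n -> Prop) (w : vec n) : Prop :=
  C w /\ forall w1 w2 : vec n, C w1 -> C w2 -> forall t, 0 < t < 1 ->
    (forall i, w i = t * w1 i + (1 - t) * w2 i) -> w1 = w2.

Definition glb_of (S : R -> Prop) (v : R) : Prop :=
  (forall s, S s -> v <= s) /\ (forall v', (forall s, S s -> v' <= s) -> v' <= v).
Definition lub_of (S : R -> Prop) (v : R) : Prop :=
  (forall s, S s -> s <= v) /\ (forall v', (forall s, S s -> s <= v') -> v <= v').

(* ---------- the problem data (k written as k.+1, e_1 = ord0) ---------- *)
Definition e1 (k : nat) : vec k.+1 := fun a => if a == ord0 then 1 else 0.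

Definition Uset (k : nat) (Uhat : vec k.+1 -> Prop) (u : vec k.+1) : Prop :=
  Uhat u /\ u ord0 = 1.

Definition Wset (m n2 : nat) (B : mat m n2) (d : vec n2) (w : vec m) : Prop :=
  (forall i, 0 <= w i) /\ forall j, trmv B w j = d j.

Definition RLP_feasible (n1 n2 m k : nat) (A : mat m n1) (B : mat m n2)
  (F : mat m k.+1) (X : vec n1 -> Prop) (Uhat : vec k.+1 -> Prop)
  (x : vec n1) (y : vec k.+1 -> vec n2) : Prop :=
  X x /\ forall u, Uset Uhat u ->
    forall i, mulmv A x i + mulmv B (y u) i >= mulmv F u i.

Definition inner_value (n1 n2 m k : nat) (A : mat m n1) (B : mat m n2)
  (d : vec n2) (F : mat m k.+1) (x : vec n1) (u : vec k.+1) (q : R) : Prop :=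
  glb_of (fun s => exists y : vec n2,
            (forall i, mulmv B y i >= mulmv F u i - mulmv A x i) /\ s = dot d y) q.

Definition pi_value (n1 n2 m k : nat) (A : mat m n1) (B : mat m n2)
  (d : vec n2) (F : mat m k.+1) (Uhat : vec k.+1 -> Prop) (x : vec n1) (p : R)
  : Prop :=
  lub_of (fun s => exists u, Uset Uhat u /\ inner_value A B d F x u s) p.

Definition prod_cone (k m : nat) (Uhat : vec k -> Prop) (z : vec (k + m)) : Prop :=
  Uhat (fun a => z (lshift m a)) /\ forall b, 0 <= z (rshift k b).

Definition COP (n : nat) (K : vec n -> Prop) (M : mat n n) : Prop :=
  forall z : vec n, K z -> 0 <= Rsum (fun i => Rsum (fun j => z i * M i j * z j)).

Definition g1 (k m : nat) : vec (k.+1 + m) :=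
  fun i => match split i with inl a => e1 a | inr _ => 0 end.

(* E = ( -d e1^T   B^T ) in R^{n2 x (k+m)} *)
Definition Emat (n2 m k : nat) (B : mat m n2) (d : vec n2) : mat n2 (k.+1 + m) :=
  fun j i => match split i with
             | inl a => - (d j * e1 a)
             | inr b => B b j
             end.

(* G(x) = [0, (F - A x e1^T)^T ; F - A x e1^T, 0] *)
Definition Gmat (n1 m k : nat) (A : mat m n1) (F : mat m k.+1) (x : vec n1)
  : mat (k.+1 + m) (k.+1 + m) :=
  let H := fun (b : 'I_m) (a : 'I_k.+1) => F b a - mulmv A x b * e1 a in
  fun i j => match split i, split j with
             | inl a, inr b => H b a
             | inr b, inl a => H b a
             | _, _ => 0
             end.

Definition idmat (n : nat) : mat n n := fun i j => if i == j then 1 else 0.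

Definition copos_matrix (n1 n2 m k : nat) (A : mat m n1) (B : mat m n2)
  (d : vec n2) (F : mat m k.+1) (x : vec n1)
  (lam : R) (Lam : mat (k.+1 + m) n2) (rho : R) : mat (k.+1 + m) (k.+1 + m) :=
  fun i j =>
    lam * (@g1 k m i * @g1 k m j)
    - / 2 * Gmat A F x i j
    + / 2 * (Rsum (fun l => @Emat n2 m k B d l i * Lam j l)
             + Rsum (fun l => Lam i l * @Emat n2 m k B d l j))
    + rho * idmat i j.

(* Lower bound: at [z = (u, w)] with [u] in [U] and [w] an extreme point of
   [W], the [Lambda] term of the quadratic form vanishes (as [B^T w = d] and
   [u_1 = 1]), so copositivity gives [lambda + rho (|u|^2 + |w|^2) >= w^T (F u - A x)]
   with [|u|^2 + |w|^2 <= r]; strong LP duality, followed by moving the dual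
   optimum to a no worse extreme point, makes the maximum of [w^T (F u - A x)]
   over extreme points the inner value, hence [lambda + r rho >= pi(x)].
   Upper bound: for [Lambda = t E^T] the quadratic form equals
   [lambda u_1^2 + rho |u|^2] minus a penalized Lagrangian
   [w^T (F u - A x u_1) - t |B^T w - d u_1|^2 - rho |w|^2], which is homogeneous
   of degree two, so copositivity reduces to [u] in [U]. A compactness argument
   over [U] shows that for all [rho, delta > 0] some [t] bounds this Lagrangian
   by [pi(x) + delta], giving feasible points of value [pi(x) + delta + r rho]. *)

From Stdlib Require Import Reals Lra Psatz Classical ClassicalChoice FunctionalExtensionality.
From mathcomp Require Import all_boot.
From HB Require Import structures.
Open Scope R_scope.
Set Implicit Arguments.
Unset Strict Implicit.

HB.instance Definition _ :=
  Monoid.isComLaw.Build R 0 Rplus (fun x y z => esym (Rplus_assoc x y z)) Rplus_comm Rplus_0_l.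

Section FiniteSums.
Variable n : nat.
Implicit Types f g : 'I_n -> R.

Lemma eq_Rsum f g : (forall i, f i = g i) -> Rsum f = Rsum g.
Proof. by move=> fg; apply: eq_bigr => i _. Qed.

Lemma RsumD f g : Rsum (fun i => f i + g i) = Rsum f + Rsum g.
Proof. exact: big_split. Qed.

Lemma mulr_Rsumr a f : a * Rsum f = Rsum (fun i => a * f i).
Proof.
rewrite /Rsum; elim: (index_enum _) => [|i s IH]; rewrite ?big_nil ?big_cons; first ring.
by rewrite -IH Rmult_plus_distr_l.
Qed.

Lemma mulr_Rsuml a f : Rsum f * a = Rsum (fun i => f i * a).
Proof. by rewrite Rmult_comm mulr_Rsumr; apply: eq_Rsum => i; ring. Qed.

Lemma RsumB f g : Rsum (fun i => f i - g i) = Rsum f - Rsum g.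
Proof.
rewrite (eq_Rsum (g := fun i => f i + -1 * g i)) ?RsumD -?mulr_Rsumr => [|i]; ring.
Qed.

Lemma Rsum_eq0 f : (forall i, f i = 0) -> Rsum f = 0.
Proof. by move=> f0; apply: big1 => i _. Qed.

Lemma Rbig_ge0 (s : seq 'I_n) (P : pred 'I_n) f :
  (forall i, 0 <= f i) -> 0 <= \big[Rplus/0]_(i <- s | P i) f i.
Proof.
move=> f0; elim: s => [|i s IH]; rewrite ?big_nil ?big_cons; first exact: Rle_refl.
by case: (P i) => //; apply: Rplus_le_le_0_compat.
Qed.

Lemma ler_Rsum f g : (forall i, f i <= g i) -> Rsum f <= Rsum g.
Proof.
move=> fg; rewrite /Rsum; elim: (index_enum _) => [|i s IH]; rewrite ?big_nil ?big_cons.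
  exact: Rle_refl.
exact: Rplus_le_compat.
Qed.

Lemma Rsum_ge0 f : (forall i, 0 <= f i) -> 0 <= Rsum f.
Proof. exact: Rbig_ge0. Qed.

Lemma ler_Rsum_term f i : (forall j, 0 <= f j) -> f i <= Rsum f.
Proof.
move=> f0; rewrite /Rsum (bigD1 i) //= -{1}(Rplus_0_r (f i)).
exact/Rplus_le_compat_l/Rbig_ge0.
Qed.

Lemma Rsum_kronecker f l : Rsum (fun i => f i * (if i == l then 1 else 0)) = f l.
Proof.
rewrite /Rsum (bigD1 l) //= eqxx big1 => [|i /negbTE ->]; ring.
Qed.

Lemma exchange_Rsum p (h : 'I_n -> 'I_p -> R) :
  Rsum (fun i => Rsum (h i)) = Rsum (fun j => Rsum (fun i => h i j)).
Proof. exact: exchange_big. Qed.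

End FiniteSums.

Lemma Rsum_split_ord n1 n2 (f : 'I_(n1 + n2) -> R) :
  Rsum f = Rsum (fun a => f (lshift n2 a)) + Rsum (fun b => f (rshift n1 b)).
Proof. exact: big_split_ord. Qed.

Lemma Rsum_mul n p (a : 'I_n -> R) (b : 'I_p -> R) :
  Rsum (fun i => Rsum (fun j => a i * b j)) = Rsum a * Rsum b.
Proof.
by rewrite mulr_Rsuml; apply: eq_Rsum => i; rewrite mulr_Rsumr.
Qed.

Lemma cv_const (a : R) : Un_cv (fun _ => a) a.
Proof. by move=> e he; exists 0%nat => t _; rewrite /R_dist Rminus_diag_eq // Rabs_R0. Qed.

Lemma Rsum_cv n (f : nat -> vec n) (l : vec n) :
  (forall i, Un_cv (fun t => f t i) (l i)) -> Un_cv (fun t => Rsum (f t)) (Rsum l).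
Proof.
elim: n f l => [|n IH] f l fl.
  rewrite /Rsum big_ord0; apply: (Un_cv_ext (fun _ => 0)); last exact: cv_const.
  by move=> t; rewrite big_ord0.
rewrite /Rsum big_ord_recr /=.
apply: (Un_cv_ext (fun t => Rsum (fun i => f t (widen_ord (leqnSn n) i)) + f t ord_max)).
  by move=> t; rewrite /Rsum big_ord_recr.
by apply: CV_plus; [apply: IH => i | apply: fl].
Qed.

Lemma Rsum_ord_recr m (f : nat -> R) :
  Rsum (fun i : 'I_m.+1 => f i) = Rsum (fun i : 'I_m => f i) + f m.
Proof. by rewrite /Rsum big_ord_recr. Qed.

Section LinearAlgebra.
Variables p q : nat.
Implicit Types (M : mat p q) (a : R).

Lemma mulmv_comb M (y z : vec q) a i :
  mulmv M (fun l => y l + a * z l) i = mulmv M y i + a * mulmv M z i.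
Proof. by rewrite /mulmv mulr_Rsumr -RsumD; apply: eq_Rsum => j; ring. Qed.

Lemma mulmvZ M (y : vec q) a i : mulmv M (fun l => a * y l) i = a * mulmv M y i.
Proof. by rewrite /mulmv mulr_Rsumr; apply: eq_Rsum => j; ring. Qed.

Lemma trmv_comb M (w v : vec p) a j :
  trmv M (fun l => w l + a * v l) j = trmv M w j + a * trmv M v j.
Proof. by rewrite /trmv mulr_Rsumr -RsumD; apply: eq_Rsum => i; ring. Qed.

Lemma trmvZ M (w : vec p) a j : trmv M (fun l => a * w l) j = a * trmv M w j.
Proof. by rewrite /trmv mulr_Rsumr; apply: eq_Rsum => i; ring. Qed.

Lemma dot_trmv M (w : vec p) (y : vec q) : dot (trmv M w) y = dot w (mulmv M y).
Proof.
rewrite /dot /trmv /mulmv (eq_Rsum (g := fun j => Rsum (fun i => M i j * w i * y j))).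
  rewrite exchange_Rsum; apply: eq_Rsum => i.
  by rewrite mulr_Rsumr; apply: eq_Rsum => j; ring.
by move=> j; rewrite mulr_Rsuml.
Qed.

End LinearAlgebra.

Section Dot.
Variable n : nat.
Implicit Types u v w : vec n.

Lemma dot_combl u v w a : dot (fun l => u l + a * v l) w = dot u w + a * dot v w.
Proof. by rewrite /dot mulr_Rsumr -RsumD; apply: eq_Rsum => i; ring. Qed.

Lemma dot_combr u v w a : dot u (fun l => v l + a * w l) = dot u v + a * dot u w.
Proof. by rewrite /dot mulr_Rsumr -RsumD; apply: eq_Rsum => i; ring. Qed.

Lemma dotZl u v a : dot (fun l => a * u l) v = a * dot u v.
Proof. by rewrite /dot mulr_Rsumr; apply: eq_Rsum => i; ring. Qed.

Lemma dotZr u v a : dot u (fun l => a * v l) = a * dot u v.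
Proof. by rewrite /dot mulr_Rsumr; apply: eq_Rsum => i; ring. Qed.

Lemma sqnormZ u a : sqnorm (fun l => a * u l) = a * a * sqnorm u.
Proof. by rewrite /sqnorm /dot mulr_Rsumr; apply: eq_Rsum => i; ring. Qed.

Lemma sqnorm_ge0 u : 0 <= sqnorm u.
Proof. by apply: Rsum_ge0 => i; apply: Rle_0_sqr. Qed.

Lemma sqr_le_sqnorm u i : u i * u i <= sqnorm u.
Proof. by apply: (ler_Rsum_term (f := fun j => u j * u j)) => j; apply: Rle_0_sqr. Qed.

(* Young's inequality, from [(2 beta u - v)^2 >= 0] coordinatewise. *)
Lemma dot_le_sqnorm u v beta : 0 < beta ->
  dot u v <= beta * sqnorm u + sqnorm v / (4 * beta).
Proof.
move=> beta_gt0; rewrite /sqnorm /dot /Rdiv !mulr_Rsumr mulr_Rsuml -RsumD.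
apply: ler_Rsum => i.
have : 0 <= (2 * beta * u i - v i) ^ 2 / (4 * beta).
  by apply: Rmult_le_pos; [apply: pow2_ge_0 | apply/Rlt_le/Rinv_0_lt_compat; lra].
have -> : (2 * beta * u i - v i) ^ 2 / (4 * beta)
        = beta * (u i * u i) + v i * v i * / (4 * beta) - u i * v i by field; lra.
lra.
Qed.

End Dot.

Lemma weak_duality m n (B : mat m n) (c w : vec m) (y : vec n) :
  (forall b, 0 <= w b) -> (forall b, mulmv B y b >= c b) ->
  dot w c <= dot (trmv B w) y.
Proof.
by move=> w_ge0 By_ge; rewrite dot_trmv; apply: ler_Rsum => b;
  apply: Rmult_le_compat_l; [apply: w_ge0 | apply: Rge_le].
Qed.

Section Farkas.
Variables (T : Type) (vadd : T -> T -> T) (vscal : R -> T -> T).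

Definition linear_form (f : T -> R) :=
  forall y z a, f (vadd y (vscal a z)) = f y + a * f z.

Lemma farkas_extend m (a : nat -> T -> R) (b : T -> R) (mu : nat -> R) lm :
  (forall i, 0 <= mu i) -> 0 <= lm ->
  (forall y, b y = Rsum (fun i : 'I_m => mu i * a i y) + lm * a m y) ->
  exists lam : nat -> R, (forall i, 0 <= lam i) /\
    forall y, b y = Rsum (fun i : 'I_m.+1 => lam i * a i y).
Proof.
move=> mu_ge0 lm_ge0 b_mu; pose lam i := if (i < m)%N then mu i else lm.
exists lam; split=> [i | y]; first by rewrite /lam; case: ifP.
rewrite (Rsum_ord_recr m (fun i => lam i * a i y)) /lam ltnn b_mu.
by congr (_ + _); apply: eq_Rsum => i; rewrite ltn_ord.
Qed.

(* Induction on the number of forms: if some [y0] satisfies the first [m]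
   constraints but not [b], then [a m y0 < 0], and projecting along [y0]
   eliminates [a m]. *)
Lemma farkas m (a : nat -> T -> R) (b : T -> R) :
  (forall i, linear_form (a i)) -> linear_form b ->
  (forall y, (forall i, (i < m)%N -> 0 <= a i y) -> 0 <= b y) ->
  exists lam : nat -> R, (forall i, 0 <= lam i) /\
    forall y, b y = Rsum (fun i : 'I_m => lam i * a i y).
Proof.
elim: m a b => [|m IH] a b lin_a lin_b a_b.
  exists (fun _ => 0); split=> [i | y]; first exact: Rle_refl.
  rewrite /Rsum big_ord0.
  have by_ge0 := a_b y (fun i (i0 : (i < 0)%N) => False_ind _ (notF i0)).
  have := a_b (vadd y (vscal (-2) y)) (fun i (i0 : (i < 0)%N) => False_ind _ (notF i0)).
  rewrite lin_b; lra.
have ltnS_cases i : (i < m.+1)%N -> i = m \/ (i < m)%N.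
  by rewrite ltnS leq_eqVlt => /orP [/eqP -> | ->]; [left | right].
have [[y0 [a_y0 b_y0]] | no_y0] :=
  classic (exists y0, (forall i, (i < m)%N -> 0 <= a i y0) /\ b y0 < 0); last first.
  have [mu [mu_ge0 b_mu]] := IH a b lin_a lin_b (fun y a_y => Rnot_lt_le _ _
    (fun b_lt0 => no_y0 (ex_intro _ y (conj a_y b_lt0)))).
  by apply: (farkas_extend mu_ge0 (Rle_refl 0)) => y; rewrite b_mu; ring.
have am_y0 : a m y0 < 0.
  apply: Rnot_le_lt => am_ge0; suff : 0 <= b y0 by lra.
  by apply: a_b => i /ltnS_cases [-> | /a_y0].
pose a' i y := a i y - a i y0 / a m y0 * a m y.
pose b' y := b y - b y0 / a m y0 * a m y.
have lin_a' i : linear_form (a' i) by move=> y z c; rewrite /a' !lin_a; ring.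
have lin_b' : linear_form b' by move=> y z c; rewrite /b' lin_b lin_a; ring.
have a'_b' y : (forall i, (i < m)%N -> 0 <= a' i y) -> 0 <= b' y.
  move=> a'_y; pose y' := vadd y (vscal (- (a m y / a m y0)) y0).
  have -> : b' y = b y' by rewrite /y' lin_b /b'; field; lra.
  apply: a_b => i /ltnS_cases [-> | i_lt].
    by rewrite /y' lin_a; right; field; lra.
  by have := a'_y i i_lt; rewrite /a' /y' lin_a; congr (_ <= _); field; lra.
have [mu [mu_ge0 b'_mu]] := IH a' b' lin_a' lin_b' a'_b'.
pose s0 := Rsum (fun i : 'I_m => mu i * a i y0).
have s0_ge0 : 0 <= s0 by apply: Rsum_ge0 => i; apply/Rmult_le_pos/a_y0.
have lm_ge0 : 0 <= (b y0 - s0) / a m y0.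
  by have := Rinv_lt_0_compat _ am_y0; rewrite /Rdiv; nra.
apply: (farkas_extend mu_ge0 lm_ge0) => y.
rewrite (eq_Rsum (g := fun i : 'I_m => mu i * a' i y + a m y / a m y0 * (mu i * a i y0))).
  by rewrite RsumD -mulr_Rsumr -b'_mu /b' -/s0; field; lra.
by move=> i; rewrite /a'; field; lra.
Qed.

End Farkas.

Section LPDuality.
Variables (m n : nat) (B : mat m n) (d : vec n) (c : vec m) (q : R).
Hypothesis no_ray : forall y, (forall i, 0 <= mulmv B y i) -> 0 <= dot d y.
Hypothesis q_low : forall y, (forall i, mulmv B y i >= c i) -> q <= dot d y.

Lemma lp_homogenized_ge0 y tau : tau <= 0 ->
  (forall i, 0 <= mulmv B y i + c i * tau) -> 0 <= dot d y + q * tau.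
Proof.
move=> tau_le0 By_ge.
have [tau_lt0 | tau0] := Rle_lt_or_eq_dec _ _ tau_le0; last first.
  by subst tau; rewrite Rmult_0_r Rplus_0_r; apply: no_ray => i; have := By_ge i; lra.
have feasible : forall i, mulmv B (fun l => / - tau * y l) i >= c i.
  move=> i; rewrite mulmvZ; apply: Rle_ge.
  have -> : c i = / - tau * (- (c i * tau)) by field; lra.
  apply: Rmult_le_compat_l; [apply/Rlt_le/Rinv_0_lt_compat | have := By_ge i]; lra.
have := q_low feasible; rewrite dotZr => q_le.
have := Rmult_le_compat_l _ _ _ (Rlt_le _ _ (Ropp_0_gt_lt_contravar _ tau_lt0)) q_le.
by rewrite -Rmult_assoc Rinv_r; lra.
Qed.

(* Farkas' lemma for the homogenized system [B y + c tau >= 0, tau <= 0]. *)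
Lemma lp_duality : exists w, Wset B d w /\ q <= dot w c.
Proof.
pose T := (vec n * R)%type.
pose vadd (p1 p2 : T) : T := (fun l => p1.1 l + p2.1 l, p1.2 + p2.2).
pose vscal a (p : T) : T := (fun l => a * p.1 l, a * p.2).
pose a i (p : T) := if insub i is Some b then mulmv B p.1 b + c b * p.2 else - p.2.
pose bf (p : T) := dot d p.1 + q * p.2.
have lin_a i : linear_form vadd vscal (a i).
  by move=> y z s; rewrite /a; case: insub => [b|] /=; rewrite ?mulmv_comb; ring.
have lin_b : linear_form vadd vscal bf by move=> y z s; rewrite /bf /= dot_combr; ring.
have a_b p : (forall i, (i < m.+1)%N -> 0 <= a i p) -> 0 <= bf p.
  case: p => y tau a_p; apply: lp_homogenized_ge0.
    by have := a_p m (ltnSn m); rewrite /a insubF ?ltnn //=; lra.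
  by move=> i; have := a_p i (ltnW (ltn_ord i)); rewrite /a valK.
have [lam [lam_ge0 b_lam]] := farkas lin_a lin_b a_b.
have bf_lam p : bf p = Rsum (fun i : 'I_m => lam i * (mulmv B p.1 i + c i * p.2))
                       - lam m * p.2.
  rewrite b_lam (Rsum_ord_recr m (fun i => lam i * a i p)) /a insubF ?ltnn //.
  by rewrite (eq_Rsum (g := fun i : 'I_m => lam i * (mulmv B p.1 i + c i * p.2)))
    => [|i]; [ring | rewrite valK].
exists (fun i => lam i); split; first split.
- by move=> i; apply: lam_ge0.
- move=> j; have := bf_lam ((fun l => if l == j then 1 else 0), 0).
  rewrite /bf /= /dot Rsum_kronecker Rmult_0_r Rmult_0_r Rplus_0_r => ->.
  rewrite /trmv (eq_Rsum (g := fun i => lam i * mulmv B (fun l => if l == j then 1 else 0) i)).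
    by rewrite Rminus_0_r; apply: eq_Rsum => i; ring.
  by move=> i; rewrite /mulmv Rsum_kronecker; ring.
- have := bf_lam ((fun _ => 0), 1); rewrite /bf /= /dot Rsum_eq0 => [|l]; last ring.
  rewrite (eq_Rsum (g := fun i : 'I_m => lam i * c i)) => [|i]; last first.
    by rewrite /mulmv Rsum_eq0 => [|l]; ring.
  by have := lam_ge0 m; lra.
Qed.

End LPDuality.

Lemma exists_argmin (I : eqType) (s : seq I) (P : I -> Prop) (f : I -> R) :
  (exists2 i, i \in s & P i) ->
  exists i0, P i0 /\ forall i, i \in s -> P i -> f i0 <= f i.
Proof.
elim: s => [|x s IH] [i i_in Pi]; first by rewrite in_nil in i_in.
have [[i1 i1s Pi1] | none_s] := classic (exists2 i, i \in s & P i).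
  have [i0 [Pi0 i0_min]] := IH (ex_intro2 _ _ i1 i1s Pi1).
  have [[Px fx_lt] | x_not_better] := classic (P x /\ f x < f i0).
    exists x; split=> // j; rewrite in_cons => /orP [/eqP -> _ | js Pj].
      exact: Rle_refl.
    by have := i0_min j js Pj; lra.
  exists i0; split=> // j; rewrite in_cons => /orP [/eqP -> Px | js Pj].
    by apply: Rnot_lt_le => fx_lt; apply: x_not_better.
  exact: i0_min.
move: i_in Pi; rewrite in_cons => /orP [/eqP -> Px | i_s Pi]; last by case: none_s; exists i.
exists x; split=> // j; rewrite in_cons => /orP [/eqP -> _ | js Pj].
  exact: Rle_refl.
by case: none_s; exists j.
Qed.

Lemma exists_argmin_fin (T : finType) (P : T -> Prop) (f : T -> R) :
  (exists i, P i) -> exists i0, P i0 /\ forall i, P i -> f i0 <= f i.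
Proof.
move=> [i Pi]; have [|i0 [Pi0 i0_min]] := @exists_argmin _ (enum T) P f.
  by exists i; rewrite ?mem_enum.
by exists i0; split=> // j; apply: i0_min; rewrite mem_enum.
Qed.

Definition support n (w : vec n) := [pred i | Rlt_dec 0 (w i)].

Lemma supportP n (w : vec n) i : reflect (0 < w i) (i \in support w).
Proof. by rewrite inE; case: Rlt_dec => /= ?; constructor. Qed.

Section ExtremePoints.
Variables (m n : nat) (B : mat m n) (d : vec n) (c : vec m).

(* [h] is a direction of the smallest face of [W] containing [w]. *)
Definition face_direction (w h : vec m) :=
  (forall j, trmv B h j = 0) /\ (forall i, w i = 0 -> h i = 0).

Lemma face_directionN w h : face_direction w h -> face_direction w (fun l => -1 * h l).
Proof.
by case=> Bh h_supp; split=> [j | i /h_supp ->]; [rewrite trmvZ Bh |]; ring.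
Qed.

(* Ratio test: move from [w] along [h] until the first coordinate hits zero. *)
Lemma ratio_test (w h : vec m) : Wset B d w -> face_direction w h ->
  (exists i, h i < 0) -> 0 <= dot h c ->
  exists w', Wset B d w' /\ dot w c <= dot w' c /\ (#|support w'| < #|support w|)%N.
Proof.
move=> [w_ge0 Bw] [Bh h_supp] [i h_neg] hc_ge0.
have [i0 [hi0_lt0 i0_min]] := exists_argmin_fin (P := fun i => h i < 0) (fun i => w i / - h i)
  (ex_intro _ i h_neg).
pose s := w i0 / - h i0.
have s_ge0 : 0 <= s by apply/Rmult_le_pos/Rlt_le/Rinv_0_lt_compat => //; lra.
exists (fun i => w i + s * h i); split; [split | split].
- move=> j; have [hj_lt0 | hj_ge0] := Rlt_le_dec (h j) 0; last first.
    by have := w_ge0 j; nra.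
  have := i0_min j hj_lt0; rewrite -/s => s_le.
  have -> : w j = w j / - h j * - h j by field; lra.
  nra.
- by move=> j; rewrite trmv_comb Bh Bw Rmult_0_r Rplus_0_r.
- by rewrite dot_combl; nra.
- apply/proper_card/properP; split.
    apply/subsetP => j /supportP pos; apply/supportP.
    have [wj_pos | wj0] := Rle_lt_or_eq_dec _ _ (w_ge0 j) => //.
    by move: pos; rewrite -wj0 h_supp // Rmult_0_r; lra.
  exists i0; apply/supportP.
    have [wi0_pos | wi00] := Rle_lt_or_eq_dec _ _ (w_ge0 i0) => //.
    by have := h_supp i0 (esym wi00); lra.
  rewrite /s; have -> : w i0 + w i0 / - h i0 * h i0 = 0 by field; lra.
  exact: Rlt_irrefl.
Qed.

Variable K : R.
Hypothesis c_bounded : forall w, Wset B d w -> dot w c <= K.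

Lemma improving_move (w g : vec m) : Wset B d w -> face_direction w g ->
  (exists i, g i <> 0) ->
  exists w', Wset B d w' /\ dot w c <= dot w' c /\ (#|support w'| < #|support w|)%N.
Proof.
move=> w_W g_dir g_neq0.
suff nonneg_move h : face_direction w h -> (exists i, h i <> 0) -> 0 <= dot h c ->
    exists w', Wset B d w' /\ dot w c <= dot w' c /\ (#|support w'| < #|support w|)%N.
  have [gc_ge0 | gc_lt0] := Rle_lt_dec 0 (dot g c).
    exact: nonneg_move g_dir g_neq0 gc_ge0.
  apply: (nonneg_move (fun l => -1 * g l)); first exact: face_directionN.
    by case: g_neq0 => i gi; exists i; lra.
  by rewrite dotZl; lra.
move=> h_dir [i hi_neq0] hc_ge0.
have [h_neg | h_ge0] := classic (exists i, h i < 0).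
  exact: ratio_test w_W h_dir h_neg hc_ge0.
have {}h_ge0 j : 0 <= h j by apply: Rnot_lt_le => hj; apply: h_ge0; exists j.
(* [h] is a recession direction of [W], so boundedness forces [c.h = 0] *)
have hc_le0 : dot h c <= 0.
  apply: Rnot_lt_le => hc_pos; pose s := (K - dot w c + 1) / dot h c.
  have s_ge0 : 0 <= s.
    by apply/Rmult_le_pos/Rlt_le/Rinv_0_lt_compat => //; have := c_bounded w_W; lra.
  have : Wset B d (fun l => w l + s * h l).
    case: w_W h_dir => w_ge0 Bw [Bh _].
    split=> [l | j]; first by have := w_ge0 l; have := h_ge0 l; nra.
    by rewrite trmv_comb Bh Bw; ring.
  move/c_bounded; rewrite dot_combl.
  have -> : s * dot h c = K - dot w c + 1 by rewrite /s; field; lra.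
  lra.
apply: (ratio_test (h := fun l => -1 * h l)) => //; first exact: face_directionN.
  by exists i; have := h_ge0 i; lra.
by rewrite dotZl; lra.
Qed.

Lemma nonextreme_face_direction (w : vec m) : Wset B d w -> ~ extreme_point (Wset B d) w ->
  exists2 h, face_direction w h & exists i, h i <> 0.
Proof.
move=> w_W not_ext.
have [w1 [w2 [w1_W [w2_W [t [t01 [w_t w12]]]]]]] : exists w1 w2, Wset B d w1 /\
    Wset B d w2 /\ exists t, 0 < t < 1 /\
    (forall i, w i = t * w1 i + (1 - t) * w2 i) /\ w1 <> w2.
  apply: NNPP => no_pair; apply: not_ext; split=> // w1 w2 w1_W w2_W t t01 w_t.
  by apply: NNPP => w12; apply: no_pair; exists w1, w2; do 2!split=> //; exists t.
exists (fun l => w1 l + -1 * w2 l); first split.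
- by move=> j; rewrite trmv_comb (proj2 w1_W) (proj2 w2_W); ring.
- move=> i wi0; have := w_t i; have := proj1 w1_W i; have := proj1 w2_W i; nra.
- apply: NNPP => all0; apply: w12; apply: functional_extensionality => i.
  by apply: NNPP => w12i; apply: all0; exists i; lra.
Qed.

Lemma exists_extreme_point_ge (w : vec m) : Wset B d w ->
  exists w', extreme_point (Wset B d) w' /\ dot w c <= dot w' c.
Proof.
move: {2}#|support w| (erefl #|support w|) => N; elim/ltn_ind: N w => N IH w supp_w w_W.
have [w_ext | not_ext] := classic (extreme_point (Wset B d) w).
  by exists w; split=> //; apply: Rle_refl.
have [h h_dir h_neq0] := nonextreme_face_direction w_W not_ext.
have [w' [w'_W [cw_le supp_lt]]] := improving_move w_W h_dir h_neq0.
have lt_N : (#|support w'| < N)%N by rewrite -supp_w.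
have [w'' [w''_ext cw'_le]] := IH _ lt_N w' erefl w'_W.
by exists w''; split=> //; lra.
Qed.

End ExtremePoints.

Lemma glb_exists (S : R -> Prop) : (exists s, S s) -> (exists L, forall s, S s -> L <= s) ->
  exists q, glb_of S q.
Proof.
move=> [s0 S_s0] [L L_low].
have bounded : bound (fun t => S (- t)) by exists (- L) => t /L_low; lra.
have inhabited : exists t, S (- t) by exists (- s0); rewrite Ropp_involutive.
have [M [M_ub M_least]] := completeness _ bounded inhabited.
exists (- M); split=> [s Ss | v v_low].
  by have := M_ub (- s); rewrite Ropp_involutive => /(_ Ss); lra.
have : M <= - v by apply: M_least => t /v_low; lra.
lra.
Qed.

Lemma lub_exists (S : R -> Prop) : (exists s, S s) -> (exists K, forall s, S s -> s <= K) ->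
  exists p, lub_of S p.
Proof.
move=> inhabited [K K_up].
by have [M M_lub] := completeness S (ex_intro _ K K_up) inhabited; exists M.
Qed.

Lemma glb_approx (S : R -> Prop) q eps : glb_of S q -> 0 < eps -> exists2 s, S s & s < q + eps.
Proof.
move=> [_ q_greatest] eps_gt0; apply: NNPP => no_s.
suff : q + eps <= q by lra.
by apply: q_greatest => s Ss; apply: Rnot_lt_le => lt; apply: no_s; exists s.
Qed.

Lemma increasing_ge_id (phi : nat -> nat) :
  (forall t, (phi t < phi t.+1)%N) -> forall t, (t <= phi t)%N.
Proof. by move=> phi_incr; elim=> [|t IH] //; apply: leq_ltn_trans IH (phi_incr t). Qed.

Lemma compactR_bounded n (C : vec n -> Prop) : compactR C ->
  forall i, exists M, forall u, C u -> Rabs (u i) <= M.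
Proof.
move=> C_cpt i; apply: NNPP => unbounded.
have [us us_big] : exists us : nat -> vec n, forall t, C (us t) /\ INR t < Rabs (us t i).
  apply: (choice (fun t u => C u /\ INR t < Rabs (u i))) => t.
  apply: NNPP => none; apply: unbounded; exists (INR t) => u Cu.
  by apply: Rnot_lt_le => lt; apply: none; exists u.
have [phi [x [phi_incr [_ us_cv]]]] := C_cpt us (fun t => proj1 (us_big t)).
have [N near_x] := us_cv i 1 Rlt_0_1.
have [T T_big] := INR_archimed 1 (Rabs (x i) + 1) Rlt_0_1.
pose t := maxn N T.
have := near_x t (ssrnat.leP (leq_maxl N T)); rewrite /R_dist => close.
have := proj2 (us_big (phi t)).
have : INR T <= INR (phi t).
  by apply/le_INR/ssrnat.leP/(leq_trans (leq_maxr N T))/increasing_ge_id.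
have := Rabs_triang_inv (us (phi t) i) (x i); lra.
Qed.

Definition quad n (M : mat n n) (z : vec n) : R :=
  Rsum (fun i => Rsum (fun j => z i * M i j * z j)).

Section QuadraticForms.
Variables n p : nat.
Implicit Types (M : mat n n) (z : vec n).

Lemma quad_tr M z : quad (fun i j => M j i) z = quad M z.
Proof. by rewrite /quad exchange_Rsum; do 2!apply: eq_Rsum => ?; ring. Qed.

Lemma quad_outer (P Q : vec n) z :
  quad (fun i j => P i * Q j) z = Rsum (fun i => P i * z i) * Rsum (fun j => Q j * z j).
Proof. by rewrite -Rsum_mul; do 2!apply: eq_Rsum => ?; ring. Qed.

Lemma quad_mul (P : 'I_p -> 'I_n -> R) (Q : 'I_n -> 'I_p -> R) z :
  quad (fun i j => Rsum (fun l => P l i * Q j l)) z =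
  Rsum (fun l => Rsum (fun i => P l i * z i) * Rsum (fun j => Q j l * z j)).
Proof.
transitivity (Rsum (fun i => Rsum (fun l => Rsum (fun j => z i * z j * (P l i * Q j l))))).
  apply: eq_Rsum => i; rewrite -exchange_Rsum; apply: eq_Rsum => j.
  by transitivity (z i * z j * Rsum (fun l => P l i * Q j l)); [ring | rewrite mulr_Rsumr].
rewrite exchange_Rsum; apply: eq_Rsum => l; rewrite -Rsum_mul.
by do 2!apply: eq_Rsum => ?; ring.
Qed.

Lemma quad_idmat z : quad (@idmat n) z = sqnorm z.
Proof.
apply: eq_Rsum => i; rewrite -(Rsum_kronecker (fun j => z i * z j) i).
by apply: eq_Rsum => j; rewrite /idmat eq_sym; case: (j == i); ring.
Qed.

End QuadraticForms.

Lemma split_lshift p q (a : 'I_p) : split (lshift q a) = inl a.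
Proof. exact: (unsplitK (inl a)). Qed.

Lemma split_rshift p q (b : 'I_q) : split (rshift p b) = inr b.
Proof. exact: (unsplitK (inr b)). Qed.

Lemma Rsum_e1 k (f : 'I_k.+1 -> R) : Rsum (fun a => f a * e1 a) = f ord0.
Proof. exact: Rsum_kronecker. Qed.

Section CopositiveForm.
Variables (n1 n2 m k : nat) (A : mat m n1) (B : mat m n2) (d : vec n2)
  (F : mat m k.+1) (x : vec n1).

Definition upart (z : vec (k.+1 + m)) : vec k.+1 := fun a => z (lshift m a).
Definition wpart (z : vec (k.+1 + m)) : vec m := fun b => z (rshift k.+1 b).
Definition block (u : vec k.+1) (w : vec m) : vec (k.+1 + m) :=
  fun i => match split i with inl a => u a | inr b => w b end.

Lemma upart_block u w : upart (block u w) = u.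
Proof. by apply: functional_extensionality => a; rewrite /upart /block split_lshift. Qed.

Lemma wpart_block u w : wpart (block u w) = w.
Proof. by apply: functional_extensionality => b; rewrite /wpart /block split_rshift. Qed.

Lemma sqnorm_block z : sqnorm z = sqnorm (upart z) + sqnorm (wpart z).
Proof. exact: Rsum_split_ord. Qed.

(* [F v - A x v_1]: the right-hand side [F u - A x] made homogeneous in [u]. *)
Definition rhs (v : vec k.+1) : vec m := fun b => mulmv F v b - mulmv A x b * v ord0.

Lemma rhsE v b : rhs v b = Rsum (fun a => (F b a - mulmv A x b * e1 a) * v a).
Proof.
rewrite (eq_Rsum (g := fun a => F b a * v a - mulmv A x b * (v a * e1 a))) => [|a]; last ring.
by rewrite RsumB -mulr_Rsumr Rsum_e1.
Qed.

Lemma rhs_U (Uhat : vec k.+1 -> Prop) u : Uset Uhat u ->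
  rhs u = fun b => mulmv F u b - mulmv A x b.
Proof.
by move=> [_ u1]; apply: functional_extensionality => b; rewrite /rhs u1 Rmult_1_r.
Qed.

Lemma rhsZ s v b : rhs (fun a => s * v a) b = s * rhs v b.
Proof. by rewrite /rhs mulmvZ; ring. Qed.

Lemma rhs_cv (us : nat -> vec k.+1) (u : vec k.+1) :
  (forall a, Un_cv (fun t => us t a) (u a)) ->
  Un_cv (fun t => sqnorm (fun b => rhs (us t) b - rhs u b)) 0.
Proof.
move=> us_cv.
have rhs_cv b : Un_cv (fun t => rhs (us t) b) (rhs u b).
  apply: CV_minus; last by apply: CV_mult; [exact: cv_const | exact: us_cv].
  by apply: Rsum_cv => a; apply: CV_mult; [exact: cv_const | exact: us_cv].
have := @Rsum_cv m (fun t b => (rhs (us t) b - rhs u b) * (rhs (us t) b - rhs u b))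
  (fun b => (rhs u b - rhs u b) * (rhs u b - rhs u b)).
rewrite Rsum_eq0 => [|b]; last ring.
by apply=> b; apply: CV_mult; apply: CV_minus => //; exact: cv_const.
Qed.

Lemma g1_dot z : Rsum (fun i => @g1 k m i * z i) = upart z ord0.
Proof.
rewrite Rsum_split_ord [X in _ + X]Rsum_eq0 => [|b]; last by rewrite /g1 split_rshift; ring.
rewrite Rplus_0_r -(Rsum_e1 (upart z)).
by apply: eq_Rsum => a; rewrite /g1 split_lshift /upart; ring.
Qed.

Lemma Emat_mulmv z l :
  Rsum (fun i => @Emat n2 m k B d l i * z i) = trmv B (wpart z) l - d l * upart z ord0.
Proof.
have -> : trmv B (wpart z) l - d l * upart z ord0 = - d l * upart z ord0 + trmv B (wpart z) l.
  ring.
rewrite Rsum_split_ord; congr (_ + _).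
  rewrite -(Rsum_e1 (fun a => - d l * upart z a)).
  by apply: eq_Rsum => a; rewrite /Emat split_lshift /upart; ring.
by apply: eq_Rsum => b; rewrite /Emat split_rshift /wpart; ring.
Qed.

Lemma quad_Gmat z : quad (Gmat A F x) z = 2 * dot (wpart z) (rhs (upart z)).
Proof.
have G_uw a b : Gmat A F x (lshift m a) (rshift k.+1 b) = F b a - mulmv A x b * e1 a.
  by rewrite /Gmat split_lshift split_rshift.
have G_wu a b : Gmat A F x (rshift k.+1 b) (lshift m a) = F b a - mulmv A x b * e1 a.
  by rewrite /Gmat split_lshift split_rshift.
rewrite /quad Rsum_split_ord.
rewrite (eq_Rsum (g := fun a => Rsum (fun b => upart z a * (F b a - mulmv A x b * e1 a)
                                                * wpart z b))) => [|a]; last first.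
  rewrite Rsum_split_ord Rsum_eq0 ?Rplus_0_l => [|a']; last by rewrite /Gmat !split_lshift; ring.
  by apply: eq_Rsum => b; rewrite G_uw.
rewrite (eq_Rsum (f := fun b => Rsum _)
          (g := fun b => Rsum (fun a => upart z a * (F b a - mulmv A x b * e1 a)
                                         * wpart z b))) => [|b]; last first.
  rewrite Rsum_split_ord [X in _ + X]Rsum_eq0 ?Rplus_0_r => [|b']; last first.
    by rewrite /Gmat !split_rshift; ring.
  by apply: eq_Rsum => a; rewrite G_wu /upart /wpart; ring.
rewrite exchange_Rsum /dot -RsumD mulr_Rsumr; apply: eq_Rsum => b.
rewrite rhsE mulr_Rsumr -RsumD mulr_Rsumr; apply: eq_Rsum => a; ring.
Qed.

Lemma quad_copos_matrix lam Lam rho z :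
  quad (copos_matrix A B d F x lam Lam rho) z =
  lam * (upart z ord0 * upart z ord0) - dot (wpart z) (rhs (upart z))
  + Rsum (fun l => (trmv B (wpart z) l - d l * upart z ord0) * Rsum (fun i => Lam i l * z i))
  + rho * sqnorm z.
Proof.
pose EL i j := Rsum (fun l => @Emat n2 m k B d l i * Lam j l).
have -> : quad (copos_matrix A B d F x lam Lam rho) z =
    lam * quad (fun i j => @g1 k m i * @g1 k m j) z - / 2 * quad (Gmat A F x) z
    + / 2 * (quad EL z + quad (fun i j => EL j i) z) + rho * quad (@idmat _) z.
  rewrite /quad -RsumD !mulr_Rsumr -RsumB -!RsumD; apply: eq_Rsum => i.
  rewrite -RsumD !mulr_Rsumr -RsumB -!RsumD; apply: eq_Rsum => j.
  rewrite /copos_matrix /EL (eq_Rsum (f := fun l => Lam i l * _)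
    (g := fun l => @Emat n2 m k B d l j * Lam i l)) => [|l]; ring.
rewrite (quad_tr EL) (quad_outer (@g1 k m) (@g1 k m)) g1_dot.
rewrite quad_Gmat quad_idmat quad_mul.
rewrite (eq_Rsum (f := fun l => Rsum _ * Rsum _)
          (g := fun l => (trmv B (wpart z) l - d l * upart z ord0) *
                         Rsum (fun i => Lam i l * z i))) => [|l]; last by rewrite Emat_mulmv.
field.
Qed.

End CopositiveForm.

(* A recession direction [y0] of the recourse with [d.y0 < 0] would push the
   worst-case objective of a feasible solution below any lower bound. *)
Lemma no_descent_ray n1 n2 m k (A : mat m n1) (B : mat m n2) (c : vec n1) (d : vec n2)
    (F : mat m k.+1) (X : vec n1 -> Prop) (Uhat : vec k.+1 -> Prop) :
  (exists x y, RLP_feasible A B F X Uhat x y /\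
     exists M, forall u, Uset Uhat u -> dot c x + dot d (y u) <= M) ->
  (exists L, forall x y, RLP_feasible A B F X Uhat x y ->
     forall M, (forall u, Uset Uhat u -> dot c x + dot d (y u) <= M) -> L <= M) ->
  forall y0, (forall i, 0 <= mulmv B y0 i) -> 0 <= dot d y0.
Proof.
move=> [x [y [[x_X y_feas] [M M_up]]]] [L L_low] y0 By0_ge0.
apply: Rnot_lt_le => dy0_lt0.
have L_le_M := L_low x y (conj x_X y_feas) M M_up.
pose s := (M - L + 1) / - dot d y0.
have s_ge0 : 0 <= s by apply/Rmult_le_pos/Rlt_le/Rinv_0_lt_compat; lra.
have shifted_feas : RLP_feasible A B F X Uhat x (fun u l => y u l + s * y0 l).
  split=> // u u_U i; rewrite mulmv_comb.
  by have := y_feas u u_U i; have := By0_ge0 i; nra.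
have shifted_up u : Uset Uhat u ->
    dot c x + dot d (fun l => y u l + s * y0 l) <= M + s * dot d y0.
  by move/M_up; rewrite dot_combr; lra.
have := L_low _ _ shifted_feas _ shifted_up.
have -> : s * dot d y0 = - (M - L + 1) by rewrite /s; field; lra.
lra.
Qed.

(* Weak duality at a near-optimal [ys] for [c0], plus Young's inequality for
   the two error terms. *)
Lemma penalty_le m n (B : mat m n) (d ys : vec n) (c0 c w : vec m) t rho :
  0 < t -> 0 < rho -> (forall b, mulmv B ys b >= c0 b) -> (forall b, 0 <= w b) ->
  dot w c - t * sqnorm (fun l => trmv B w l - d l) - rho * sqnorm w <=
  dot d ys + sqnorm ys / (4 * t) + sqnorm (fun b => c b - c0 b) / (4 * rho).
Proof.
move=> t_gt0 rho_gt0 ys_feas w_ge0.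
have := weak_duality w_ge0 ys_feas.
have := dot_le_sqnorm (fun l => trmv B w l - d l) ys t_gt0.
have := dot_le_sqnorm w (fun b => c b - c0 b) rho_gt0.
have -> : dot w c = dot w c0 + dot w (fun b => c b - c0 b).
  by rewrite /dot -RsumD; apply: eq_Rsum => b; ring.
have -> : dot (trmv B w) ys = dot (fun l => trmv B w l - d l) ys + dot d ys.
  by rewrite /dot -RsumD; apply: eq_Rsum => l; ring.
lra.
Qed.

Section InnerProblem.
Variables (n1 n2 m k : nat) (A : mat m n1) (B : mat m n2) (d : vec n2)
  (F : mat m k.+1) (Uhat : vec k.+1 -> Prop) (x : vec n1).
Hypothesis no_ray : forall y, (forall i, 0 <= mulmv B y i) -> 0 <= dot d y.
Hypothesis recourse : forall u, Uset Uhat u ->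
  exists y : vec n2, forall i, mulmv B y i >= mulmv F u i - mulmv A x i.

Local Notation rhs := (rhs A F x).
Local Notation inner_value := (inner_value A B d F x).

Lemma W_nonempty : exists w, Wset B d w.
Proof.
have [|w [w_W _]] := lp_duality (c := fun _ => 0) (q := 0) no_ray.
  by move=> y By_ge; apply: no_ray => i; have := By_ge i; lra.
by exists w.
Qed.

Lemma Wset_le_feasible u w y : Wset B d w ->
  (forall i, mulmv B y i >= mulmv F u i - mulmv A x i) ->
  dot w (fun b => mulmv F u b - mulmv A x b) <= dot d y.
Proof.
move=> [w_ge0 Bw] y_feas; apply: Rle_trans (weak_duality w_ge0 y_feas) _.
by apply: Req_le; apply: eq_Rsum => l; rewrite Bw.
Qed.

Lemma inner_value_exists u : Uset Uhat u -> exists q, inner_value u q.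
Proof.
move=> u_U; apply: glb_exists.
  by have [y y_feas] := recourse u_U; exists (dot d y), y.
have [w w_W] := W_nonempty.
by exists (dot w (fun b => mulmv F u b - mulmv A x b)) => _ [y [/(Wset_le_feasible w_W) + ->]].
Qed.

Lemma inner_value_le_extreme u q : Uset Uhat u -> inner_value u q ->
  exists w, extreme_point (Wset B d) w /\ q <= dot w (rhs u).
Proof.
move=> u_U [q_low _].
have [w [w_W q_le]] :=
  lp_duality no_ray (fun y y_feas => q_low _ (ex_intro _ y (conj y_feas erefl))).
have [y y_feas] := recourse u_U.
have [w' [w'_ext le_w']] :=
  exists_extreme_point_ge (fun w w_W => Wset_le_feasible w_W y_feas) w_W.
by exists w'; split=> //; rewrite (rhs_U A F x u_U); apply: Rle_trans le_w'.
Qed.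

End InnerProblem.

Lemma dot_bilinear_le p q (M : mat p q) (w : vec p) (u : vec q) r :
  sqnorm u + sqnorm w <= r ->
  dot w (fun b => Rsum (fun a => M b a * u a)) <=
  Rsum (fun b => Rsum (fun a => Rabs (M b a) * r)).
Proof.
move=> uw_le; apply: ler_Rsum => b; rewrite mulr_Rsumr; apply: ler_Rsum => a.
have wu_le : Rabs (w b * u a) <= r.
  have := sqr_le_sqnorm u a; have := sqr_le_sqnorm w b.
  have := sqnorm_ge0 u; have := sqnorm_ge0 w.
  by split_Rabs; nra.
have := Rle_abs (M b a * (w b * u a)); rewrite Rabs_mult.
have := Rmult_le_compat_l _ _ _ (Rabs_pos (M b a)) wu_le.
have -> : w b * (M b a * u a) = M b a * (w b * u a) by ring.
lra.
Qed.

Section CopositiveReformulation.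
Variables (n1 n2 m k : nat) (A : mat m n1) (B : mat m n2) (d : vec n2)
  (F : mat m k.+1) (Uhat : vec k.+1 -> Prop) (x : vec n1).
Hypothesis no_ray : forall y, (forall i, 0 <= mulmv B y i) -> 0 <= dot d y.
Hypothesis recourse : forall u, Uset Uhat u ->
  exists y : vec n2, forall i, mulmv B y i >= mulmv F u i - mulmv A x i.
Hypothesis Uhat_convex : convexR Uhat.
Hypothesis Uhat_cone : coneR Uhat.
Hypothesis Uhat_pos : forall u, Uhat u -> 0 <= u ord0.
Hypothesis U_nonempty : exists u, Uset Uhat u.
Hypothesis U_compact : compactR (Uset Uhat).
Variable r : R.
Hypothesis r_bound : forall u w, Uset Uhat u -> extreme_point (Wset B d) w ->
  sqnorm u + sqnorm w <= r.

Local Notation rhs := (rhs A F x).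
Local Notation inner_value := (inner_value A B d F x).
Local Notation copos_matrix := (copos_matrix A B d F x).
Local Notation cone := (@prod_cone k.+1 m Uhat).

Lemma inner_value_bounded : exists K, forall u q, Uset Uhat u -> inner_value u q -> q <= K.
Proof.
exists (Rsum (fun b => Rsum (fun a => Rabs (F b a - mulmv A x b * e1 a) * r))).
move=> u q u_U q_val.
have [w [w_ext q_le]] := inner_value_le_extreme no_ray recourse u_U q_val.
apply: Rle_trans q_le _.
rewrite (functional_extensionality _ _ (rhsE A F x u)).
exact/dot_bilinear_le/r_bound.
Qed.

Lemma Uhat_add u v : Uhat u -> Uhat v -> Uhat (fun i => u i + v i).
Proof.
move=> u_U v_U.
have half : 0 <= / 2 <= 1 by split; lra.
have := proj2 Uhat_cone _ (Uhat_convex u_U v_U half) 2 ltac:(lra).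
congr Uhat; apply: functional_extensionality => i; field.
Qed.

(* Otherwise [u + j v] would be an unbounded ray inside the compact [U]. *)
Lemma Uhat_recession v : Uhat v -> v ord0 = 0 -> forall a, v a = 0.
Proof.
move=> v_U v0 a; apply: NNPP => va_neq0.
have [u0 [u0_U u01]] := U_nonempty.
have [M M_bound] := compactR_bounded U_compact a.
have ray_U j : Uset Uhat (fun i => u0 i + INR j * v i).
  split; first exact/Uhat_add/(proj2 Uhat_cone)/pos_INR.
  by rewrite u01 v0; ring.
have [j j_big] := INR_archimed _ (M + Rabs (u0 a)) (Rabs_pos_lt _ va_neq0).
have := M_bound _ (ray_U j).
have := Rabs_triang_inv (INR j * v a) (- u0 a).
rewrite Rabs_mult Rabs_Ropp Rabs_right; last exact/Rle_ge/pos_INR.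
have -> : INR j * v a - - u0 a = u0 a + INR j * v a by ring.
lra.
Qed.

Lemma copositive_value_ge lam Lam rho : COP cone (copos_matrix lam Lam rho) -> 0 <= rho ->
  forall u q, Uset Uhat u -> inner_value u q -> q <= lam + r * rho.
Proof.
move=> cop rho_ge0 u q u_U q_val.
have [w [w_ext q_le]] := inner_value_le_extreme no_ray recourse u_U q_val.
have [[w_ge0 Bw] _] := w_ext.
have z_cone : cone (block u w).
  split=> [|b]; first by rewrite -/(upart _) upart_block; case: u_U.
  by rewrite /block split_rshift.
have : 0 <= quad (copos_matrix lam Lam rho) (block u w) := cop _ z_cone.
rewrite quad_copos_matrix sqnorm_block upart_block wpart_block (proj2 u_U) Rsum_eq0 => [|l].
  by have := r_bound u_U w_ext; nra.
by rewrite Bw; ring.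
Qed.

Definition penalty_Lam t : mat (k.+1 + m) n2 := fun i l => t * @Emat n2 m k B d l i.

Definition penalty t rho (v : vec k.+1) (w : vec m) :=
  dot w (rhs v) - t * sqnorm (fun l => trmv B w l - d l * v ord0) - rho * sqnorm w.

Lemma quad_penalty lam t rho z :
  quad (copos_matrix lam (penalty_Lam t) rho) z =
  lam * (upart z ord0 * upart z ord0) - penalty t rho (upart z) (wpart z)
  + rho * sqnorm (upart z).
Proof.
rewrite quad_copos_matrix sqnorm_block /penalty /sqnorm /dot mulr_Rsumr.
rewrite (eq_Rsum (f := fun l => _ * Rsum _)
  (g := fun l => t * ((trmv B (wpart z) l - d l * upart z ord0) *
                      (trmv B (wpart z) l - d l * upart z ord0)))) => [|l]; first ring.
rewrite (eq_Rsum (g := fun i => t * (@Emat n2 m k B d l i * z i))) => [|i]; last first.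
  by rewrite /penalty_Lam; ring.
by rewrite -mulr_Rsumr Emat_mulmv; ring.
Qed.

Lemma penaltyZ t rho s v w :
  penalty t rho (fun a => s * v a) (fun b => s * w b) = s * s * penalty t rho v w.
Proof.
rewrite /penalty (functional_extensionality _ _ (rhsZ A F x s v)) dotZl dotZr sqnormZ.
rewrite (_ : (fun l => trmv B (fun b => s * w b) l - d l * (s * v ord0)) =
             (fun l => s * (trmv B w l - d l * v ord0))) ?sqnormZ; first ring.
by apply: functional_extensionality => l; rewrite trmvZ; ring.
Qed.

Lemma copositive_of_penalty t lam rho : 0 <= t -> 0 <= rho ->
  (forall u w, Uset Uhat u -> (forall b, 0 <= w b) -> penalty t rho u w <= lam) ->
  COP cone (copos_matrix lam (penalty_Lam t) rho).
Proof.
move=> t_ge0 rho_ge0 penalty_le_lam z [u_Uhat w_ge0].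
have {u_Uhat}v_U : Uhat (upart z) := u_Uhat.
have {}w_ge0 b : 0 <= wpart z b := w_ge0 b.
change (0 <= quad (copos_matrix lam (penalty_Lam t) rho) z); rewrite quad_penalty.
set v := upart z in v_U *; set w := wpart z in w_ge0 *.
have := Rmult_le_pos _ _ rho_ge0 (sqnorm_ge0 v).
suff : penalty t rho v w <= lam * (v ord0 * v ord0) by lra.
have [v0_pos | v0_eq0] := Rle_lt_or_eq_dec _ _ (Uhat_pos v_U); last first.
  have rhs0 b : rhs v b = 0.
    rewrite /rhs /mulmv -v0_eq0 Rsum_eq0 => [|a]; first ring.
    by rewrite (Uhat_recession v_U (esym v0_eq0)) Rmult_0_r.
  rewrite /penalty /dot Rsum_eq0 => [|b]; last by rewrite rhs0 Rmult_0_r.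
  by have := sqnorm_ge0 w; have := sqnorm_ge0 (fun l => trmv B w l - d l * v ord0); nra.
(* rescale [z] so that its [u]-part lies in [U] *)
pose s := / v ord0.
have u_U : Uset Uhat (fun a => s * v a).
  split; first exact/(proj2 Uhat_cone)/Rlt_le/Rinv_0_lt_compat.
  by rewrite /s Rinv_l //; lra.
have sw_ge0 b : 0 <= s * w b by apply/Rmult_le_pos/w_ge0/Rlt_le/Rinv_0_lt_compat.
have := penalty_le_lam _ _ u_U sw_ge0; rewrite penaltyZ => scaled_le.
have := Rmult_le_compat_l _ _ _ (Rle_0_sqr (v ord0)) scaled_le; rewrite /Rsqr.
have e : v ord0 * v ord0 * (s * s) = 1 by rewrite /s; field; lra.
by rewrite -Rmult_assoc e Rmult_1_l Rmult_comm.
Qed.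

Lemma penalty_U t rho u w : Uset Uhat u ->
  penalty t rho u w = dot w (rhs u) - t * sqnorm (fun l => trmv B w l - d l) - rho * sqnorm w.
Proof. by move=> [_ u1]; rewrite /penalty u1; do 3!f_equal; apply: eq_Rsum => l; ring. Qed.

(* If no [t] works, pick [(u_j, w_j)] violating the bound for [t = j] and a
   subsequence [u_j -> us]; [penalty_le] at a near-optimal recourse [ys] for
   [us] bounds the penalty once [t] is large and [u_j] is close to [us]. *)
Lemma penalty_bounded rho delta p : 0 < rho -> 0 < delta ->
  (forall u q, Uset Uhat u -> inner_value u q -> q <= p) ->
  exists t, 0 <= t /\ forall u w, Uset Uhat u -> (forall b, 0 <= w b) ->
    penalty t rho u w <= p + delta.
Proof.
move=> rho_gt0 delta_gt0 p_up; apply: NNPP => no_t.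
pose bad (j : nat) (uw : vec k.+1 * vec m) := [/\ Uset Uhat uw.1,
  forall b, 0 <= uw.2 b & p + delta < penalty (INR j) rho uw.1 uw.2].
have [uw uw_bad] : exists uw, forall j, bad j (uw j).
  apply: (choice bad) => j; apply: NNPP => none; apply: no_t.
  exists (INR j); split=> [|u w u_U w_ge0]; first exact: pos_INR.
  by apply: Rnot_lt_le => lt; apply: none; exists (u, w).
have uw_U j : Uset Uhat (uw j).1 by case: (uw_bad j).
have [phi [us [phi_incr [us_U us_cv]]]] := U_compact uw_U.
have [qs qs_val] := inner_value_exists no_ray recourse us_U.
have [_ [ys [ys_feas ->]] ys_near] :=
  glb_approx qs_val (Rdiv_lt_0_compat _ 4 delta_gt0 ltac:(lra)).
have {}ys_feas b : mulmv B ys b >= rhs us b by rewrite (rhs_U A F x us_U).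
have qs_le := p_up _ _ us_U qs_val.
pose t := sqnorm ys / delta + 1.
have t_gt0 : 0 < t.
  by have := sqnorm_ge0 ys; have := Rinv_0_lt_compat _ delta_gt0; rewrite /t /Rdiv; nra.
have ys_small : sqnorm ys / (4 * t) <= delta / 4.
  apply: (Rmult_le_reg_r (4 * t)); first lra.
  have -> : sqnorm ys / (4 * t) * (4 * t) = sqnorm ys by field; lra.
  have -> : delta / 4 * (4 * t) = sqnorm ys + delta by rewrite /t; field; lra.
  lra.
have [N1 N1_close] := rhs_cv A F x us_cv (Rmult_lt_0_compat _ _ rho_gt0 delta_gt0).
have [N2 N2_big] := INR_archimed 1 t Rlt_0_1.
pose j := maxn N1 N2; case: (uw_bad (phi j)) => u_U w_ge0 bad_j.
set u := (uw (phi j)).1 in u_U bad_j *; set w := (uw (phi j)).2 in w_ge0 bad_j *.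
have e_small : sqnorm (fun b => rhs u b - rhs us b) / (4 * rho) < delta / 4.
  have : Rabs (sqnorm (fun b => rhs u b - rhs us b) - 0) < rho * delta.
    exact: N1_close j (ssrnat.leP (leq_maxl N1 N2)).
  have := Rle_abs (sqnorm (fun b => rhs u b - rhs us b)); rewrite Rminus_0_r.
  have -> : delta / 4 = rho * delta / (4 * rho) by field; lra.
  by move=> ? ?; apply: Rmult_lt_compat_r; [apply: Rinv_0_lt_compat |]; lra.
have t_le : t <= INR (phi j).
  apply: Rle_trans (Rlt_le _ _ N2_big) _; rewrite Rmult_1_r.
  by apply/le_INR/ssrnat.leP/(leq_trans (leq_maxr N1 N2))/increasing_ge_id.
have := @penalty_le _ _ B d ys (rhs us) (rhs u) w t rho t_gt0 rho_gt0 ys_feas w_ge0.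
rewrite -(penalty_U t rho w u_U).
have : penalty (INR (phi j)) rho u w <= penalty t rho u w.
  by rewrite !penalty_U //; have := sqnorm_ge0 (fun l => trmv B w l - d l); nra.
lra.
Qed.

Lemma copositive_value_le p eps : 0 < r -> 0 < eps ->
  (forall u q, Uset Uhat u -> inner_value u q -> q <= p) ->
  exists lam Lam rho, COP cone (copos_matrix lam Lam rho) /\ 0 <= rho /\
    lam + r * rho <= p + eps.
Proof.
move=> r_gt0 eps_gt0 p_up.
have rho_gt0 : 0 < eps / (2 * r) by apply: Rdiv_lt_0_compat; lra.
have [t [t_ge0 t_bound]] := penalty_bounded rho_gt0 (ltac:(lra) : 0 < eps / 2) p_up.
exists (p + eps / 2), (penalty_Lam t), (eps / (2 * r)).
split; first exact: copositive_of_penalty (Rlt_le _ _ rho_gt0) t_bound.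
split; first exact: Rlt_le.
have -> : r * (eps / (2 * r)) = eps / 2 by field; lra.
lra.
Qed.

Lemma pi_value_exists : exists p, pi_value A B d F Uhat x p.
Proof.
have [K K_up] := inner_value_bounded.
apply: lub_exists; last by exists K => s [u [u_U s_val]]; apply: K_up s_val.
have [u u_U] := U_nonempty; have [q q_val] := inner_value_exists no_ray recourse u_U.
by exists q, u.
Qed.

End CopositiveReformulation.

Unset Implicit Arguments.

Theorem proposition1
  (n1 n2 m k : nat)
  (A : mat m n1) (B : mat m n2) (c : vec n1) (d : vec n2) (F : mat m k.+1)
  (X : vec n1 -> Prop) (Uhat : vec k.+1 -> Prop)
  (* X closed convex *)
  (hXc : closedR X) (hXv : convexR X)
  (* Uhat closed convex full-dimensional coneR contained in R_+ x R^(k-1) *)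
  (hUc : closedR Uhat) (hUv : convexR Uhat) (hUcone : coneR Uhat)
  (hUfd : full_dimensional Uhat) (hUpos : forall u, Uhat u -> 0 <= u ord0)
  (* U nonempty and compact *)
  (hUne : exists u, Uset Uhat u) (hUcpt : compactR (Uset Uhat))
  (* (A2) feasibility *)
  (hA2 : exists x y, RLP_feasible A B F X Uhat x y)
  (* (A3) v*_RLP finite: some feasible point has finite objective, and the
     objective c^T x + sup_{u in U} d^T y(u) is bounded below by L *)
  (hA3up : exists x y, RLP_feasible A B F X Uhat x y /\
             exists M, forall u, Uset Uhat u -> dot c x + dot d (y u) <= M)
  (hA3low : exists L, forall x y, RLP_feasible A B F X Uhat x y ->
             forall M, (forall u, Uset Uhat u -> dot c x + dot d (y u) <= M) ->
             L <= M)
  (* (A4) relatively complete recourse *)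
  (hA4 : forall x u, X x -> Uset Uhat u ->
           exists y : vec n2, forall i, mulmv B y i >= mulmv F u i - mulmv A x i)
  (r : R) (hr : 0 < r)
  (hrb : forall u w, Uset Uhat u -> extreme_point (Wset B d) w ->
           sqnorm u + sqnorm w <= r)
  (x : vec n1) (hx : X x) :
  exists p : R,
    pi_value A B d F Uhat x p /\
    glb_of (fun s => exists (lam : R) (Lam : mat (k.+1 + m) n2) (rho : R),
              COP (@prod_cone k.+1 m Uhat) (copos_matrix A B d F x lam Lam rho) /\
              0 <= rho /\ s = lam + r * rho) p.
Proof.
have no_ray := no_descent_ray hA3up hA3low.
have recourse u := hA4 x u hx.
have [p [p_ub p_least]] := pi_value_exists no_ray recourse hUne hrb.
have p_up u q : Uset Uhat u -> inner_value A B d F x u q -> q <= p.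
  by move=> u_U q_val; apply: p_ub; exists u.
exists p; split=> //; split=> [s [lam [Lam [rho [cop [rho_ge0 ->]]]]] | v v_low].
  apply: p_least => q [u [u_U q_val]].
  exact: (copositive_value_ge no_ray recourse hrb cop rho_ge0 u_U q_val).
apply: Rnot_lt_le => p_lt_v.
have [lam [Lam [rho [cop [rho_ge0 value_le]]]]] :=
  copositive_value_le no_ray recourse hUv hUcone hUpos hUne hUcpt hr
    (ltac:(lra) : 0 < (v - p) / 2) p_up.
have : v <= lam + r * rho by apply: v_low; exists lam, Lam, rho.
lra.
Qed.
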